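(* For all $d\ge1$, $\alpha>1$, positive weights $\boldsymbol\gamma=\{\gamma_u\}$ with $\gamma_\emptyset=1$, and $M\ge1$, $$\sum_{\mathbf h\notin\mathcal A_d(M)}\frac1{r(\mathbf h)}\le C_{2,d,\tau,\alpha,\boldsymbol\gamma}\,M^{-\frac{1-\tau}{\alpha\tau}}\qquad\text{for all }\tau\in(\tfrac1\alpha,1),$$ where $$C_{2,d,\tau,\alpha,\boldsymbol\gamma}:=\gamma_{\{1\}}^{\frac{\tau-1}{\alpha\tau}}\,\frac{\tau}{1-\tau}\Big(\sum_{u\subseteq\{1:d\}}\gamma_u^\tau[2\zeta(\alpha\tau)]^{|u|}\Big)^{1/\tau}.$$
   Context: $\{1:d\}=\{1,\ldots,d\}$; $\zeta$ is the Riemann zeta function. Weights $\gamma_u>0$ for finite $u\subset\mathbb N$, $\gamma_\emptyset=1$. For $\mathbf h\in\mathbb Z^d$, $\mathrm{supp}(\mathbf h)=\{j:h_j\ne0\}$, $r(\mathbf h)=\gamma_{\mathrm{supp}(\mathbf h)}^{-1}\prod_{j\in\mathrm{supp}(\mathbf h)}|h_j|^\alpha$, and $\mathcal A_d(M)=\{\mathbf h\in\mathbb Z^d:r(\mathbf h)\le M\}$. *)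

From HB Require Import structures.
From mathcomp Require Import all_boot all_order all_algebra.
From mathcomp Require Import finmap.
From mathcomp Require Import all_classical all_reals all_analysis.
Set Implicit Arguments. Unset Strict Implicit. Unset Printing Implicit Defensive.
Import Order.TTheory GRing.Theory Num.Theory numFieldNormedType.Exports.
Local Open Scope ring_scope.

Definition zeta (R : realType) (s : R) : R :=
  limn (series (fun n : nat => (n.+1%:R : R) `^ (- s))).

(* Coordinates are 'I_d (0-based); coordinate j corresponds to index j+1 in {1:d}. *)
Definition toN (d : nat) (U : {set 'I_d}) : {fset nat} :=
  [fset (val j).+1 | j in enum U]%fset.

Definition supp (d : nat) (h : {ffun 'I_d -> int}) : {fset nat} :=
  toN [set j | h j != 0].

Definition rfun (R : realType) (d : nat) (alpha : R) (gamma : {fset nat} -> R)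
  (h : {ffun 'I_d -> int}) : R :=
  (gamma (supp h))^-1 * \prod_(j : 'I_d | h j != 0) (`|h j|%:~R : R) `^ alpha.

Definition C2 (R : realType) (d : nat) (tau alpha : R) (gamma : {fset nat} -> R) : R :=
  (gamma [fset 1%N]%fset) `^ ((tau - 1) / (alpha * tau)) * (tau / (1 - tau)) *
  (\sum_(U : {set 'I_d}) (gamma (toN U)) `^ tau * (2 * zeta (alpha * tau)) ^+ #|U|)
    `^ (1 / tau).

From HB Require Import structures.
From mathcomp Require Import all_boot all_order all_algebra.
From mathcomp Require Import finmap.
From mathcomp Require Import all_classical all_reals all_analysis.
From mathcomp Require Import ring lra.
Import Order.TTheory GRing.Theory Num.Theory numFieldNormedType.Exports.
Set Implicit Arguments. Unset Strict Implicit. Unset Printing Implicit Defensive.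
Local Open Scope ring_scope.

(* Let X be a finite set of points outside A_d(M).  Since 1/r(h) < 1/M on X,
   sum_X 1/r <= M^(tau-1) sum_X r^(-tau).  Summed over all of Z^d, r^(-tau)
   factorizes along supports, giving at most
   S = sum_u gamma_u^tau (2 zeta(alpha tau))^|u|.  The points k e_1 with
   k <= (M gamma_{1})^(1/alpha) lie inside A_d(M), outside X, and each carries
   weight at least M^(-tau); removing them yields
   sum_X 1/r <= M^(tau-1) S - gamma_{1}^(1/alpha) M^(1/alpha-1).
   Young's inequality with exponents 1/tau and 1/(1-tau), applied at
   y = M^(1 - 1/(alpha tau)), bounds this by C_2 M^(-(1-tau)/(alpha tau)). *)

Section PowR.
Variable R : realType.

Lemma gt0_powRD (x r s : R) : 0 < x -> x `^ (r + s) = x `^ r * x `^ s.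
Proof. by move=> x0; rewrite powRD // lt0r_neq0 // implybT. Qed.

Lemma powRV (x r : R) : 0 <= x -> x^-1 `^ r = x `^ (- r).
Proof. by move=> x0; rewrite -powR_inv1 // -powRrM mulN1r. Qed.

Lemma powR_prod (I : Type) (s : seq I) (P : pred I) (f : I -> R) (r : R) :
  (forall i, P i -> 0 <= f i) ->
  (\prod_(i <- s | P i) f i) `^ r = \prod_(i <- s | P i) f i `^ r.
Proof.
move=> f0; elim: s => [|i s IH]; first by rewrite !big_nil powR1.
by rewrite !big_cons; case: ifP => Pi //; rewrite powRM ?IH ?f0 ?prodr_ge0.
Qed.

Lemma powR1B_ge1D (x q : R) : 0 <= q -> x < 1 -> 1 + q * x <= (1 - x) `^ (- q).
Proof.
move=> q0 x1; rewrite /powR gt_eqF ?subr_gt0 //.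
apply: le_trans (expR_ge1Dx _); rewrite lerD2l mulNr -mulrN ler_wpM2l //.
by rewrite lerNr le_ln1Dx // ltrNl opprK.
Qed.

Lemma self_le_powR_mul (a M tau : R) :
  0 < a -> a <= M^-1 -> tau <= 1 -> a <= M `^ (tau - 1) * a `^ tau.
Proof.
move=> a0 aM t1; have M0 : 0 < M by rewrite -invr_gt0 (lt_le_trans a0).
rewrite -[M]invrK powRV ?invr_ge0 ?(ltW M0) // opprB.
rewrite -{1}[a](powRr1 (ltW a0)) -{1}(subrK tau 1) gt0_powRD // ler_pM2r ?powR_gt0 //.
by rewrite ge0_ler_powR ?nnegrE ?subr_ge0 ?(ltW a0) ?(le_trans (ltW a0)).
Qed.
End PowR.

Section Zeta.
Variable R : realType.
Implicit Types s x : R.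

Lemma powRN_le_telescope s x : 1 < s -> 1 < x ->
  x `^ (- s) <= ((x - 1) `^ (1 - s) - x `^ (1 - s)) / (s - 1).
Proof.
move=> s1 x1; have x0 : 0 < x by lra.
have s0 : 0 < s - 1 by lra.
have xV1 : x^-1 < 1 by rewrite invf_lt1.
have bernoulli := powR1B_ge1D (ltW s0) xV1; rewrite opprB in bernoulli.
have -> : x - 1 = x * (1 - x^-1) by rewrite mulrBr mulr1 mulfV ?gt_eqF.
rewrite powRM ?subr_ge0 ?(ltW x0) ?(ltW xV1) // ler_pdivlMr // lerBrDl.
apply: le_trans (ler_wpM2l (powR_ge0 x (1 - s)) bernoulli).
rewrite addrC gt0_powRD // powRr1 ?(ltW x0) // [in leRHS]mulrDr mulr1.
rewrite [leRHS]addrC lerD2r.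
by rewrite [leRHS](_ : _ = x `^ (- s) * (s - 1)) //; field; rewrite lt0r_neq0.
Qed.

Lemma sum_powRN_le s N : 1 < s -> \sum_(i < N) (i.+1%:R : R) `^ (- s) <= s / (s - 1).
Proof.
move=> s1; have s0 : 0 < s - 1 by lra.
suff tail n : \sum_(i < n.+1) (i.+1%:R : R) `^ (- s) + n.+1%:R `^ (1 - s) / (s - 1)
    <= s / (s - 1).
  case: N => [|N]; first by rewrite big_ord0 divr_ge0 // ltW // (lt_trans ltr01 s1).
  by apply: le_trans (tail N); rewrite lerDl divr_ge0 ?powR_ge0 ?ltW.
elim: n => [|n IH].
  by rewrite big_ord1 powR1 -[X in X + _](divff (lt0r_neq0 s0)) -mulrDl subrK.
rewrite big_ord_recr /=; apply: le_trans IH; rewrite -addrA lerD2l.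
have := @powRN_le_telescope s n.+2%:R s1.
by rewrite ltr1n -natr1 addrK mulrBl => /(_ isT); lra.
Qed.

Lemma sum_powRN_le_zeta s N : 1 < s -> \sum_(i < N) (i.+1%:R : R) `^ (- s) <= zeta s.
Proof.
move=> s1; rewrite /zeta; set u := series _.
have u_nd : nondecreasing_seq u.
  by apply: nondecreasing_series => n _ _; exact: powR_ge0.
have : cvgn u.
  apply: nondecreasing_is_cvgn => //; exists (s / (s - 1)) => _ [n _ <-].
  by rewrite /u seriesEord; exact: sum_powRN_le.
by move=> /(nondecreasing_cvgn_le u_nd)/(_ N); rewrite /u seriesEord.
Qed.

Lemma zeta_ge0 s : 1 < s -> 0 <= zeta s.
Proof. by move=> s1; have := sum_powRN_le_zeta 0 s1; rewrite big_ord0. Qed.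
End Zeta.

Lemma ler_sum_uniq_sub (R : numDomainType) (T : eqType) (s s' : seq T) (F : T -> R) :
  uniq s -> uniq s' -> {subset s <= s'} -> (forall x, 0 <= F x) ->
  \sum_(x <- s) F x <= \sum_(x <- s') F x.
Proof.
move=> us us' ss' F0; rewrite [leRHS](bigID (mem s)) /=.
have -> : \sum_(x <- s' | x \in s) F x = \sum_(x <- s) F x.
  rewrite -big_filter; apply: perm_big; apply: uniq_perm; rewrite ?filter_uniq //.
  by move=> x; rewrite mem_filter andb_idr //; apply: ss'.
by rewrite lerDl sumr_ge0.
Qed.

Lemma sum_ffun_supp (R : comPzSemiRingType) (I T : finType) (t0 : T)
    (G : {set I} -> R) (w : T -> R) :
  \sum_(k : {ffun I -> T}) G [set j | k j != t0] * \prod_(j | k j != t0) w (k j)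
  = \sum_(U : {set I}) G U * (\sum_(t | t != t0) w t) ^+ #|U|.
Proof.
rewrite (partition_big (fun k : {ffun I -> T} => [set j | k j != t0]) xpredT) //=.
apply: eq_bigr => U _; rewrite -prodr_const (big_distr_big t0) mulr_sumr.
apply: eq_big => [k | k /eqP suppk]; last first.
  by rewrite suppk; congr (_ * _); apply: eq_bigl => j; rewrite -suppk inE.
apply/eqP/familyP => [<- j | kU].
  by rewrite inE; case: ifP => [nz|/negbFE/eqP ->]; rewrite inE.
apply/setP => j; have := kU j; rewrite !inE.
by case: (j \in U) => [|/eqP ->]; rewrite ?eqxx.
Qed.

Definition int_of_box {N : nat} (t : option (bool * 'I_N)) : int :=
  if t is Some (b, i) then (-1) ^+ b * i.+1%:Z else 0.

Lemma int_of_box_eq0 N (t : option (bool * 'I_N)) : (int_of_box t == 0) = (t == None).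
Proof. by case: t => [[b i]|] //=; rewrite mulf_eq0 signr_eq0. Qed.

Lemma absz_int_of_box N b (i : 'I_N) : `|int_of_box (Some (b, i))|%N = i.+1.
Proof. by rewrite /= abszMsign. Qed.

Lemma int_of_box_inj N : injective (@int_of_box N).
Proof.
move=> [[b i]|] [[b' i']|] //; last 2 first.
- by move=> /(congr1 (eq_op^~ 0)); rewrite !int_of_box_eq0.
- by move=> /(congr1 (eq_op^~ 0)); rewrite !int_of_box_eq0.
move=> e; have ii' : i = i'.
  by have := congr1 absz e; rewrite !absz_int_of_box => -[] /val_inj.
by move: e; rewrite /= ii' => /mulIf-/(_ isT)/signr_inj ->.
Qed.

Lemma int_of_box_onto N (n : int) : (`|n| <= N)%N ->
  exists t : option (bool * 'I_N), int_of_box t = n.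
Proof.
have [-> _|n0 nN] := eqVneq n 0; first by exists None.
have n_gt0 : (0 < `|n|)%N by rewrite absz_gt0.
have nN' : (`|n|.-1 < N)%N by rewrite prednK.
by exists (Some (n < 0, Ordinal nN')); rewrite /= prednK // -intEsign.
Qed.

Lemma sum_int_of_box (R : pzSemiRingType) N (f : nat -> R) :
  \sum_(t : option (bool * 'I_N) | t != None) f `|int_of_box t|%N
  = 2 * \sum_(i < N) f i.+1.
Proof.
rewrite (reindex_omap Some id) => [|[]//].
rewrite (eq_bigl xpredT) => [|j]; last by rewrite /= eqxx.
rewrite (eq_bigr (fun p : bool * 'I_N => f p.2.+1)) => [|[b i] _]; last first.
  by rewrite absz_int_of_box.
rewrite -(pair_bigA _ (fun (_ : bool) (i : 'I_N) => f i.+1)).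
by rewrite big_bool /= mulr_natl mulr2n.
Qed.

Definition intv_of_box {d N : nat} (k : {ffun 'I_d -> option (bool * 'I_N)}) :
  {ffun 'I_d -> int} := [ffun j => int_of_box (k j)].

Lemma intv_of_box_inj d N : injective (@intv_of_box d N).
Proof.
move=> k k' /ffunP e; apply/ffunP => j.
by apply: int_of_box_inj; have := e j; rewrite !ffunE.
Qed.

Lemma intv_of_box_onto d N (h : {ffun 'I_d -> int}) : (forall j, `|h j| <= N)%N ->
  exists k : {ffun 'I_d -> option (bool * 'I_N)}, intv_of_box k = h.
Proof.
move=> hN; have /fin_all_exists [k hk] j := int_of_box_onto (hN j).
by exists [ffun j => k j]; apply/ffunP => j; rewrite !ffunE.
Qed.

Section Rfun.
Variables (R : realType) (d : nat) (alpha : R) (gamma : {fset nat} -> R).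
Hypothesis gamma_gt0 : forall u, 0 < gamma u.
Local Notation r := (@rfun R d alpha gamma).

Lemma rfun_gt0 h : 0 < r h.
Proof.
rewrite mulr_gt0 ?invr_gt0 // prodr_gt0 // => j hj.
by rewrite powR_gt0 // ltr0z normr_gt0.
Qed.

Lemma rfunV_powR (h : {ffun 'I_d -> int}) tau :
  (r h)^-1 `^ tau
  = gamma (supp h) `^ tau * \prod_(j | h j != 0) (`|h j|%:~R : R) `^ (- (alpha * tau)).
Proof.
have ge0 j : 0 <= (`|h j|%:~R : R) `^ alpha by exact: powR_ge0.
rewrite invfM invrK powRM ?invr_ge0 ?prodr_ge0 ?(ltW (gamma_gt0 _)) //.
rewrite powRV ?prodr_ge0 // powR_prod //; congr (_ * _).
by apply: eq_bigr => j _; rewrite -powRrM mulrN.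
Qed.

Lemma sum_rfunV_powR_box N tau :
  \sum_(k : {ffun 'I_d -> option (bool * 'I_N)}) (r (intv_of_box k))^-1 `^ tau
  = \sum_(U : {set 'I_d}) gamma (toN U) `^ tau
      * (2 * \sum_(i < N) (i.+1%:R : R) `^ (- (alpha * tau))) ^+ #|U|.
Proof.
pose w (t : option (bool * 'I_N)) : R := (`|int_of_box t|%N%:R) `^ (- (alpha * tau)).
rewrite -(sum_int_of_box N (fun n => n%:R `^ (- (alpha * tau)))).
rewrite -(sum_ffun_supp None (fun U => gamma (toN U) `^ tau) w).
apply: eq_bigr => k _; rewrite rfunV_powR /supp.
have -> : [set j | intv_of_box k j != 0] = [set j | k j != None].
  by apply/setP => j; rewrite !inE ffunE int_of_box_eq0.
by congr (_ * _); apply: eq_big => [j | j _]; rewrite ffunE ?int_of_box_eq0.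
Qed.

Lemma sum_rfunV_powR_le (Y : seq {ffun 'I_d -> int}) tau :
  1 < alpha * tau -> uniq Y ->
  \sum_(h <- Y) (r h)^-1 `^ tau
  <= \sum_(U : {set 'I_d}) gamma (toN U) `^ tau * (2 * zeta (alpha * tau)) ^+ #|U|.
Proof.
move=> at1 uY; pose N := \max_(h <- Y) \max_j `|h j|%N.
pose box := map (@intv_of_box d N) (enum {ffun 'I_d -> option (bool * 'I_N)}).
have Y_box : {subset Y <= box}.
  move=> h hY; have [|k <-] := @intv_of_box_onto d N h; last exact: map_f (mem_enum _ _).
  by move=> j; apply: leq_trans (leq_bigmax_seq _ hY isT); exact: leq_bigmax.
have u_box : uniq box by rewrite map_inj_uniq ?enum_uniq //; exact: intv_of_box_inj.
apply: le_trans (ler_sum_uniq_sub uY u_box Y_box (fun h => powR_ge0 _ _)) _.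
rewrite big_map big_enum /= sum_rfunV_powR_box; apply: ler_sum => U _.
have sum_ge0 : 0 <= \sum_(i < N) (i.+1%:R : R) `^ (- (alpha * tau)).
  by apply: sumr_ge0 => i _; exact: powR_ge0.
have sum_le := sum_powRN_le_zeta N at1.
rewrite ler_wpM2l ?powR_ge0 // lerXn2r ?nnegrE ?ler_pM2l //.
  by rewrite mulr_ge0.
by rewrite mulr_ge0 // (le_trans sum_ge0).
Qed.
End Rfun.

Section Young.
Variable R : realType.

Lemma young_affine (S c y tau : R) : 0 <= S -> 0 < c -> 0 <= y -> 0 < tau < 1 ->
  S * y `^ tau <= c + tau * c `^ ((tau - 1) / tau) * S `^ (1 / tau) * y.
Proof.
move=> S0 c0 y0 /andP[t0 t1]; have t1' : 0 < 1 - tau by rewrite subr_gt0.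
have := @conjugate_powR R (S * y `^ tau * c `^ (tau - 1)) (c `^ (1 - tau))
  (1 / tau) (1 / (1 - tau)).
rewrite !mulr_ge0 ?powR_ge0 ?divr_gt0 // !invf_div !divr1 subrKC.
move=> /(_ isT isT isT isT erefl); rewrite -mulrA -gt0_powRD //.
have -> : tau - 1 + (1 - tau) = 0 by ring.
rewrite powRr0 mulr1.
have -> : (c `^ (1 - tau)) `^ (1 / (1 - tau)) = c.
  by rewrite -powRrM div1r mulfV ?lt0r_neq0 // powRr1 // ltW.
have -> : (S * y `^ tau * c `^ (tau - 1)) `^ (1 / tau)
    = S `^ (1 / tau) * y * c `^ ((tau - 1) / tau).
  by rewrite !powRM ?mulr_ge0 ?powR_ge0 // -!powRrM !div1r mulfV ?lt0r_neq0 // powRr1.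
move=> /le_trans; apply; rewrite addrC lerD ?ger_pMr ?gerBl ?(ltW t0) //.
by rewrite [leRHS](_ : _ = S `^ (1 / tau) * y * c `^ ((tau - 1) / tau) * tau) //; ring.
Qed.

Lemma young_tail_bound (M S c alpha tau : R) :
  0 < M -> 0 <= S -> 0 < c -> 0 < alpha -> 0 < tau < 1 ->
  M `^ (tau - 1) * S - c * M `^ (alpha^-1 - 1)
  <= c `^ ((tau - 1) / tau) * (tau / (1 - tau)) * S `^ (1 / tau)
     * M `^ (- ((1 - tau) / (alpha * tau))).
Proof.
move=> M0 S0 c0 a0 t01; have /andP[t0 t1] := t01.
set y := M `^ (1 - (alpha * tau)^-1); set m := M `^ (alpha^-1 - 1).
set C := c `^ ((tau - 1) / tau) * S `^ (1 / tau).
have Ey : y `^ tau * m = M `^ (tau - 1).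
  by rewrite -powRrM -gt0_powRD //; congr (M `^ _); field; rewrite !lt0r_neq0.
have Ez : y * m = M `^ (- ((1 - tau) / (alpha * tau))).
  by rewrite -gt0_powRD //; congr (M `^ _); field; rewrite !lt0r_neq0.
rewrite -Ey -Ez (@le_trans _ _ (tau * C * (y * m))) //.
  have := young_affine S0 c0 (powR_ge0 M (1 - (alpha * tau)^-1)) t01.
  by move=> /(ler_wpM2r (powR_ge0 M (alpha^-1 - 1))); rewrite -/y -/m lerBlDl /C; lra.
rewrite -mulrA [leRHS](_ : _ = tau / (1 - tau) * (C * (y * m))); last by rewrite /C; ring.
by rewrite ler_wpM2r ?mulr_ge0 ?powR_ge0 // ler_pdivlMr ?subr_gt0 // ler_piMr ?gerBl ?ltW.
Qed.
End Young.

Definition axis_point {d : nat} (k : nat) : {ffun 'I_d.+1 -> int} :=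
  [ffun j => if j == ord0 then k%:Z else 0].

Lemma axis_point_inj d : injective (@axis_point d).
Proof. by move=> k k' /ffunP /(_ ord0); rewrite !ffunE eqxx => -[]. Qed.

Lemma toN0 d : toN (finset.set0 : {set 'I_d}) = fset0.
Proof. by apply/fsetP => n; rewrite inE; apply/imfsetP => -[j]; rewrite /= enum_set0. Qed.

Lemma toN1 d : toN [set ord0 : 'I_d.+1] = [fset 1%N]%fset.
Proof.
apply/fsetP => n; rewrite inE; apply/imfsetP/eqP => [[j]|->].
  by rewrite /= enum_set1 inE => /eqP -> ->.
by exists ord0; rewrite //= enum_set1 inE.
Qed.

Section Tail.
Variables (R : realType) (d : nat) (alpha : R) (gamma : {fset nat} -> R) (M tau : R).
Hypotheses (gamma_gt0 : forall u, 0 < gamma u) (gamma0 : gamma fset0 = 1).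
Hypotheses (alpha_gt0 : 0 < alpha) (M_ge1 : 1 <= M).
Hypotheses (tau_lt1 : tau < 1) (alpha_tau_gt1 : 1 < alpha * tau).
Local Notation r := (@rfun R d.+1 alpha gamma).
Local Notation gamma1 := (gamma [fset 1%N]%fset).
Local Notation S :=
  (\sum_(U : {set 'I_d.+1}) gamma (toN U) `^ tau * (2 * zeta (alpha * tau)) ^+ #|U|).

Let M_gt0 : 0 < M. Proof. exact: lt_le_trans ltr01 M_ge1. Qed.
Let tau_gt0 : 0 < tau. Proof. by rewrite -(pmulr_rgt0 _ alpha_gt0) (lt_trans ltr01). Qed.

Lemma rfun_axis_point_le k : k%:R <= (M * gamma1) `^ alpha^-1 -> r (axis_point k) <= M.
Proof.
case: k => [_|k kx].
  rewrite /rfun /supp (_ : [set j | _] = finset.set0); last first.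
    by apply/setP => j; rewrite !inE ffunE; case: ifP.
  by rewrite toN0 gamma0 invr1 mul1r big_pred0 // => j; rewrite ffunE; case: ifP.
rewrite /rfun /supp (_ : [set j | _] = [set ord0]); last first.
  by apply/setP => j; rewrite !inE ffunE; case: ifP.
rewrite toN1 (big_pred1 ord0) => [|j]; last by rewrite /= ffunE; case: ifP.
rewrite ffunE eqxx mulrC -ler_pdivlMr ?invr_gt0 // invrK.
apply: le_trans (ge0_ler_powR (ltW alpha_gt0) _ _ kx) _; rewrite ?nnegrE ?powR_ge0 //.
by rewrite -powRrM mulVf ?lt0r_neq0 // powRr1 // mulr_ge0 // ltW.
Qed.

Lemma sum_tail_powR_le (X : seq {ffun 'I_d.+1 -> int}) :
  uniq X -> (forall h, h \in X -> M < r h) ->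
  \sum_(h <- X) (r h)^-1 `^ tau
    + (Num.truncn ((M * gamma1) `^ alpha^-1)).+1%:R * M^-1 `^ tau <= S.
Proof.
move=> uX XM; set K := (Num.truncn _).+1.
pose head := map (@axis_point d) (iota 0 K).
have head_le h : h \in head -> r h <= M.
  case/mapP => k; rewrite mem_iota add0n => /andP[_ kK] ->.
  by apply: rfun_axis_point_le; rewrite -truncn_ge_nat ?powR_ge0.
have u_head : uniq (X ++ head).
  rewrite cat_uniq uX map_inj_uniq ?iota_uniq ?andbT; last exact: axis_point_inj.
  by apply/hasPn => h /head_le; apply: contraTN => /XM; rewrite -ltNge.
apply: le_trans (sum_rfunV_powR_le gamma_gt0 alpha_tau_gt1 u_head).
rewrite big_cat lerD2l big_map.
have -> : iota 0 K = index_iota 0 K by rewrite /index_iota subn0.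
rewrite mulr_natl -{1}(subn0 K) -sumr_const_nat; apply: ler_sum_nat => k kK.
rewrite ge0_ler_powR ?nnegrE ?invr_ge0 ?(ltW (rfun_gt0 _ _ _)) ?(ltW M_gt0) ?(ltW tau_gt0) //.
by rewrite lef_pV2 ?posrE ?rfun_gt0 // head_le // map_f // mem_iota.
Qed.

Lemma sum_tail_le (X : seq {ffun 'I_d.+1 -> int}) :
  uniq X -> (forall h, h \in X -> M < r h) ->
  \sum_(h <- X) (r h)^-1 <= M `^ (tau - 1) * S - gamma1 `^ alpha^-1 * M `^ (alpha^-1 - 1).
Proof.
move=> uX XM; have := sum_tail_powR_le uX XM.
set K := (Num.truncn _).+1; rewrite -lerBrDr => XS.
apply: le_trans (_ : _ <= M `^ (tau - 1) * (S - K%:R * M^-1 `^ tau)) _.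
  apply: le_trans (ler_wpM2l (powR_ge0 _ _) XS); rewrite mulr_sumr big_seq [leRHS]big_seq.
  apply: ler_sum => h hX; apply: self_le_powR_mul; rewrite ?invr_gt0 ?rfun_gt0 ?ltW //.
  by rewrite ltf_pV2 ?posrE ?rfun_gt0 ?XM.
have eM : M `^ (tau - 1) * M^-1 `^ tau = M^-1.
  by rewrite powRV ?(ltW M_gt0) // -gt0_powRD // addrAC subrr add0r powR_inv1 // ltW.
have eG : gamma1 `^ alpha^-1 * M `^ (alpha^-1 - 1) = (M * gamma1) `^ alpha^-1 * M^-1.
  by rewrite powRM ?ltW // gt0_powRD // powR_inv1 ?ltW //; ring.
rewrite mulrBr lerD2l lerN2 mulrCA eM eG ler_wpM2r ?invr_ge0 ?(ltW M_gt0) //.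
exact/ltW/truncnS_gt.
Qed.

Lemma sum_tail_le_C2 (X : seq {ffun 'I_d.+1 -> int}) :
  uniq X -> (forall h, h \in X -> M < r h) ->
  \sum_(h <- X) (r h)^-1 <= C2 d.+1 tau alpha gamma * M `^ (- ((1 - tau) / (alpha * tau))).
Proof.
move=> uX XM; apply: le_trans (sum_tail_le uX XM) _.
have S_ge0 : 0 <= S.
  by apply: sumr_ge0 => U _; rewrite mulr_ge0 ?powR_ge0 ?exprn_ge0 ?mulr_ge0 ?zeta_ge0.
have tau01 : 0 < tau < 1 by rewrite tau_gt0 tau_lt1.
apply: le_trans (young_tail_bound M_gt0 S_ge0 (powR_gt0 _ (gamma_gt0 _)) alpha_gt0 tau01) _.
rewrite /C2 -powRrM (_ : alpha^-1 * ((tau - 1) / tau) = (tau - 1) / (alpha * tau)) //.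
by field; rewrite !lt0r_neq0.
Qed.
End Tail.

Theorem lemma6 (R : realType) (d : nat) (alpha : R) (gamma : {fset nat} -> R) (M : R) :
  (1 <= d)%N -> 1 < alpha ->
  (forall u : {fset nat}, 0 < gamma u) -> gamma fset0 = 1 ->
  1 <= M ->
  forall tau : R, alpha^-1 < tau -> tau < 1 ->
  (\esum_(h in [set h : {ffun 'I_d -> int} | (M < rfun alpha gamma h)%R])
      ((rfun alpha gamma h)^-1)%:E
    <= (C2 d tau alpha gamma * M `^ (- ((1 - tau) / (alpha * tau))))%:E)%E.
Proof.
move=> d_ge1 alpha_gt1 gamma_gt0 gamma0 M_ge1 tau alpha_tau tau_lt1.
have alpha_gt0 : 0 < alpha by rewrite (lt_trans ltr01).
have alpha_tau_gt1 : 1 < alpha * tau by rewrite -(mulfV (lt0r_neq0 alpha_gt0)) ltr_pM2l.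
case: d d_ge1 => // d _.
apply: ge_ereal_sup => _ [X [finX XM] <-].
rewrite fsumEFin // lee_fin fsbig_finite //=.
apply: sum_tail_le_C2 => //; first exact: fset_uniq.
by move=> h; rewrite in_fset_set // inE => /XM.
Qed.
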